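(* Let $(\mathcal{X},\rho)$ be a totally bounded metric space and $\eta:\mathcal{X}\to\mathcal{Y}$ a function. There exists a sequence of instances $(X_n)_{n\ge0}$ in $\mathcal{X}$ on which the nearest neighbor rule is not online consistent on $\eta$ if and only if there is no positive separation between classes, i.e. \[\inf_{x,x'\in\mathcal{X}:\ \eta(x)\neq\eta(x')}\rho(x,x')=0.\]
   Context: For a deterministic sequence $(X_n)_{n\ge0}$, a nearest neighbor sequence is any $(\tilde X_n)_{n\ge1}$ with $\tilde X_n\in\arg\min_{x\in\{X_0,\dots,X_{n-1}\}}\rho(X_n,x)$. The nearest neighbor rule is online consistent on $\eta$ for the sequence if, for every such choice of nearest neighbors, $\limsup_{N\to\infty}\frac1N\sum_{n=1}^N\mathbb{1}\{\eta(X_n)\neq\eta(\tilde X_n)\}=0$. The infimum over the empty set is $+\infty$. *)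

From Stdlib Require Import Reals List ClassicalEpsilon.
From Coquelicot Require Import Coquelicot.
Open Scope R_scope.

Definition is_metric {X : Type} (rho : X -> X -> R) : Prop :=
  (forall x y, 0 <= rho x y) /\
  (forall x y, rho x y = 0 <-> x = y) /\
  (forall x y, rho x y = rho y x) /\
  (forall x y z, rho x z <= rho x y + rho y z).

Definition totally_bounded {X : Type} (rho : X -> X -> R) : Prop :=
  forall eps, 0 < eps -> exists l : list X, forall x, exists y, In y l /\ rho x y < eps.

Definition nn_sequence {X : Type} (rho : X -> X -> R) (Xs Xt : nat -> X) : Prop :=
  forall n, (1 <= n)%nat ->
    (exists i, (i < n)%nat /\ Xt n = Xs i) /\
    (forall i, (i < n)%nat -> rho (Xs n) (Xt n) <= rho (Xs n) (Xs i)).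

Definition mistake {X Y : Type} (eta : X -> Y) (Xs Xt : nat -> X) (n : nat) : R :=
  if excluded_middle_informative (eta (Xs n) <> eta (Xt n)) then 1 else 0.

(* average mistake rate (1/N) sum_{n=1}^N 1{...}, indexed by k = N - 1 (N >= 1). *)
Definition mistake_rate {X Y : Type} (eta : X -> Y) (Xs Xt : nat -> X) (k : nat) : R :=
  sum_f_R0 (fun i => mistake eta Xs Xt (S i)) k / INR (S k).

Definition nn_online_consistent {X Y : Type} (rho : X -> X -> R) (eta : X -> Y)
  (Xs : nat -> X) : Prop :=
  forall Xt, nn_sequence rho Xs Xt ->
    LimSup_seq (mistake_rate eta Xs Xt) = Finite 0.

(* inf_{x,x' : eta x <> eta x'} rho(x,x')  (as an Rbar; +oo for the empty set) *)
Definition class_separation {X Y : Type} (rho : X -> X -> R) (eta : X -> Y) : Rbar :=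
  Glb_Rbar (fun r => exists x x', eta x <> eta x' /\ r = rho x x').

(* If the classes are [d]-separated, cover the space by finitely many balls of
   radius [d/2].  A mistake at time [n] means that the nearest earlier point is
   at distance at least [d], so no earlier point lies in the ball of [X_n]; hence
   there are at most as many mistakes as balls, and the mistake rate is
   [O(1/N)].

   If the separation is [0], present the points in pairs [(a, b)] with
   [eta a <> eta b], each pair chosen after the past [S] so that every point of
   [a :: S] at least as close to [b] as [a] has a label different from [eta b].
   Either some past point [p] is a limit of points of other labels, and then
   [a = p] together with [b] close enough to [p] works; or every past point is
   at positive distance from the other labels, and any pair of different labels
   closer than half of all these distances works.  Then every second prediction
   is wrong, whatever the tie-breaking, and the mistake rate stays above [1/2]. *)
From Stdlib Require Import Reals List Lia Lra Classical ClassicalEpsilon.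
From Coquelicot Require Import Coquelicot.
Open Scope R_scope.

Lemma class_separation_eq0 (X Y : Type) (rho : X -> X -> R) (eta : X -> Y) :
  (forall x x', 0 <= rho x x') ->
  class_separation rho eta = Finite 0 <->
  forall d, 0 < d -> exists x x', eta x <> eta x' /\ rho x x' < d.
Proof.
  intros rho_ge0; unfold class_separation.
  set (E := fun r => exists x x', eta x <> eta x' /\ r = rho x x').
  destruct (Glb_Rbar_correct E) as [glb_lb glb_greatest].
  split.
  - intros E0 d Hd. apply NNPP; intros Hfar.
    assert (Hd_lb : Rbar_le d (Glb_Rbar E)).
    { apply glb_greatest. intros r [x [x' [Hxx' ->]]]. simpl.
      apply Rnot_lt_le; intros Hlt. apply Hfar. eauto. }
    rewrite E0 in Hd_lb. simpl in Hd_lb. lra.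
  - intros Hclose. apply is_glb_Rbar_unique. split.
    + intros r [x [x' [_ ->]]]. apply rho_ge0.
    + intros l Hl. destruct l as [r| |]; simpl; auto.
      * apply Rnot_lt_le; intros Hr.
        destruct (Hclose r Hr) as [x [x' [Hxx' Hlt]]].
        specialize (Hl (rho x x') (ex_intro _ x (ex_intro _ x' (conj Hxx' eq_refl)))).
        simpl in Hl. lra.
      * destruct (Hclose 1 Rlt_0_1) as [x [x' [Hxx' _]]].
        exact (Hl (rho x x') (ex_intro _ x (ex_intro _ x' (conj Hxx' eq_refl)))).
Qed.

Lemma exists_argmin_lt (g : nat -> R) (m : nat) :
  exists i, (i < S m)%nat /\ forall j, (j < S m)%nat -> g i <= g j.
Proof.
  induction m as [|m [i [Hi Hmin]]].
  - exists 0%nat; split; [lia|]. intros j Hj. replace j with 0%nat by lia. lra.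
  - destruct (Rle_dec (g i) (g (S m))) as [Hle|Hgt].
    + exists i; split; [lia|]. intros j Hj.
      destruct (Nat.eq_dec j (S m)) as [->|Hne]; [exact Hle|]. apply Hmin; lia.
    + exists (S m); split; [lia|]. intros j Hj.
      destruct (Nat.eq_dec j (S m)) as [->|Hne]; [lra|].
      specialize (Hmin j ltac:(lia)). lra.
Qed.

Lemma nn_sequence_exists (X : Type) (rho : X -> X -> R) (Xs : nat -> X) :
  exists Xt, nn_sequence rho Xs Xt.
Proof.
  destruct (choice _ (fun m => exists_argmin_lt (fun i => rho (Xs (S m)) (Xs i)) m))
    as [idx Hidx].
  exists (fun n => match n with O => Xs O | S m => Xs (idx m) end).
  intros [|m] Hm; [lia|].
  destruct (Hidx m) as [Hlt Hmin]. split; [eauto|exact Hmin].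
Qed.

Lemma sum_f_R0_indicator_le_length (A : Type) (P : nat -> Prop) (g : nat -> A)
    (l : list A) (k : nat) :
  (forall i, In (g i) l) ->
  (forall i j, P i -> P j -> g i = g j -> i = j) ->
  sum_f_R0 (fun i => if excluded_middle_informative (P i) then 1 else 0) k
    <= INR (length l).
Proof.
  intros g_in g_inj.
  set (Pb := fun i => if excluded_middle_informative (P i) then true else false).
  assert (sum_eq : forall n, sum_f_R0 (fun i => if excluded_middle_informative (P i)
                                                then 1 else 0) n
                             = INR (length (filter Pb (seq 0 (S n))))).
  { intros n; induction n as [|n IH]; simpl sum_f_R0.
    - unfold Pb; simpl. destruct excluded_middle_informative; simpl; lra.
    - rewrite IH, (seq_S (S n)), filter_app, length_app, plus_INR. f_equal.
      unfold Pb; simpl. destruct excluded_middle_informative; simpl; lra. }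
  rewrite sum_eq. apply le_INR.
  rewrite <- (length_map g).
  apply NoDup_incl_length.
  - apply NoDup_map_NoDup_ForallPairs; [|apply NoDup_filter, seq_NoDup].
    intros i j Hi Hj. apply filter_In in Hi as [_ Hi]. apply filter_In in Hj as [_ Hj].
    unfold Pb in Hi, Hj.
    destruct (excluded_middle_informative (P i)), (excluded_middle_informative (P j));
      try discriminate. auto.
  - intros y Hy. apply in_map_iff in Hy as [i [<- _]]. apply g_in.
Qed.

Lemma sum_f_R0_ge_half (f : nat -> R) :
  (forall i, 0 <= f i) -> (forall j, f (2 * j)%nat = 1) ->
  forall k, INR (S k) / 2 <= sum_f_R0 f k.
Proof.
  intros f_ge0 f_even.
  assert (sum_even : forall j, INR (S j) <= sum_f_R0 f (2 * j)).
  { induction j as [|j IH].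
    - simpl. pose proof (f_even 0%nat). simpl in *. lra.
    - pose proof (f_even (S j)) as Hnext. pose proof (f_ge0 (S (2 * j))).
      replace (2 * S j)%nat with (S (S (2 * j))) in * by lia.
      remember (2 * j)%nat as m. simpl sum_f_R0. rewrite S_INR. lra. }
  assert (INR_double : forall j, INR (2 * j) = 2 * INR j).
  { intros j. rewrite mult_INR. reflexivity. }
  intros k. destruct (Nat.Even_or_Odd k) as [[j ->]|[j ->]].
  - pose proof (sum_even j). rewrite !S_INR, INR_double in *. lra.
  - replace (2 * j + 1)%nat with (S (2 * j)) by lia.
    change (sum_f_R0 f (S (2 * j))) with (sum_f_R0 f (2 * j) + f (S (2 * j))).
    pose proof (sum_even j). pose proof (f_ge0 (S (2 * j))).
    rewrite !S_INR, INR_double in *. lra.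
Qed.

Lemma LimSup_seq_eq0_of_harmonic_bound (u : nat -> R) (C : R) :
  (forall k, 0 <= u k <= C / INR (S k)) -> LimSup_seq u = 0.
Proof.
  intros Hu. apply is_LimSup_seq_unique, is_lim_LimSup_seq.
  apply (is_lim_seq_le_le (fun _ => 0) u (fun k => C / INR (S k))); [exact Hu| |].
  - apply is_lim_seq_const.
  - replace (Finite 0) with (Rbar_mult C 0) by (simpl; f_equal; ring).
    apply is_lim_seq_scal_l.
    change (Finite 0) with (Rbar_inv p_infty).
    apply is_lim_seq_inv; [|discriminate].
    apply (is_lim_seq_incr_1 INR), is_lim_seq_INR.
Qed.

Lemma common_pos_lower_bound (A : Type) (B : A -> R -> Prop) (l : list A) :
  (forall a, In a l -> exists e, 0 < e /\ forall r, B a r -> e <= r) ->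
  exists e, 0 < e /\ forall a, In a l -> forall r, B a r -> e <= r.
Proof.
  induction l as [|a l IH]; intros Hbound.
  - exists 1. split; [lra|]. intros a [].
  - destruct (Hbound a (or_introl eq_refl)) as [ea [Hea Ha]].
    destruct IH as [el [Hel Hl]]; [intros; apply Hbound; right; assumption|].
    exists (Rmin ea el). split; [apply Rmin_pos; assumption|].
    intros b [<-|Hb] r Hr.
    + pose proof (Rmin_l ea el). pose proof (Ha r Hr). lra.
    + pose proof (Rmin_r ea el). pose proof (Hl b Hb r Hr). lra.
Qed.

Section NearestNeighborMistakes.

Variables (X Y : Type) (rho : X -> X -> R) (eta : X -> Y).
Hypothesis rho_metric : is_metric rho.

Let rho_ge0 : forall x y, 0 <= rho x y.
Proof. apply rho_metric. Qed.

Let rho_eq0 : forall x y, rho x y = 0 <-> x = y.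
Proof. apply rho_metric. Qed.

Let rho_sym : forall x y, rho x y = rho y x.
Proof. apply rho_metric. Qed.

Let rho_triangle : forall x y z, rho x z <= rho x y + rho y z.
Proof. apply rho_metric. Qed.

Lemma mistake_rate_ge0 (Xs Xt : nat -> X) (k : nat) :
  0 <= mistake_rate eta Xs Xt k.
Proof.
  unfold mistake_rate. apply Rdiv_le_0_compat; [|apply lt_0_INR; lia].
  apply cond_pos_sum. intros i. unfold mistake.
  destruct excluded_middle_informative; lra.
Qed.

Lemma not_nn_online_consistent_of_odd_mistakes (Xs : nat -> X) :
  (forall Xt, nn_sequence rho Xs Xt ->
     forall j, eta (Xs (S (2 * j))) <> eta (Xt (S (2 * j)))) ->
  ~ nn_online_consistent rho eta Xs.
Proof.
  intros odd_mistakes consistent.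
  destruct (nn_sequence_exists X rho Xs) as [Xt HXt].
  assert (rate_ge_half : forall k, / 2 <= mistake_rate eta Xs Xt k).
  { intros k. unfold mistake_rate.
    assert (0 < INR (S k)) by (apply lt_0_INR; lia).
    apply Rle_div_r; [lra|].
    enough (INR (S k) / 2 <= sum_f_R0 (fun i => mistake eta Xs Xt (S i)) k) by lra.
    apply sum_f_R0_ge_half; intros; unfold mistake;
      destruct excluded_middle_informative as [|Hno]; try lra.
    exfalso. exact (Hno (odd_mistakes Xt HXt _)). }
  pose proof (LimSup_le (fun _ => / 2) (mistake_rate eta Xs Xt)
                (ex_intro _ 0%nat (fun k _ => rate_ge_half k))) as Hle.
  rewrite LimSup_seq_const, (consistent Xt HXt) in Hle. simpl in Hle. lra.
Qed.

Lemma nn_mistake_in_new_cell (d : R) (c : X -> X) (Xs Xt : nat -> X) :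
  (forall x x', eta x <> eta x' -> d <= rho x x') ->
  (forall x, rho x (c x) < d / 2) ->
  nn_sequence rho Xs Xt ->
  forall i j, (i < j)%nat -> eta (Xs (S j)) <> eta (Xt (S j)) ->
  c (Xs (S i)) <> c (Xs (S j)).
Proof.
  intros separated c_close HXt i j Hij mistake_j same_cell.
  destruct (HXt (S j) ltac:(lia)) as [_ nn_min].
  pose proof (nn_min (S i) ltac:(lia)) as Hnn.
  pose proof (separated _ _ mistake_j) as Hfar.
  pose proof (c_close (Xs (S i))) as Hi. pose proof (c_close (Xs (S j))) as Hj.
  rewrite same_cell, rho_sym in Hi.
  pose proof (rho_triangle (Xs (S j)) (c (Xs (S j))) (Xs (S i))). lra.
Qed.

Lemma nn_online_consistent_of_separated (d : R) (Xs : nat -> X) :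
  totally_bounded rho -> 0 < d ->
  (forall x x', eta x <> eta x' -> d <= rho x x') ->
  nn_online_consistent rho eta Xs.
Proof.
  intros Htb Hd separated Xt HXt.
  destruct (Htb (d / 2) ltac:(lra)) as [net Hnet].
  destruct (choice _ Hnet) as [c Hc].
  apply LimSup_seq_eq0_of_harmonic_bound with (C := INR (length net)).
  intros k. split; [apply mistake_rate_ge0|].
  unfold mistake_rate, Rdiv. apply Rmult_le_compat_r.
  { left. apply Rinv_0_lt_compat, lt_0_INR. lia. }
  apply (sum_f_R0_indicator_le_length _ _ (fun i => c (Xs (S i)))).
  - intros i. apply Hc.
  - intros i j mistake_i mistake_j same_cell.
    destruct (Nat.lt_total i j) as [Hij|[Hij|Hij]]; [exfalso| exact Hij |exfalso].
    + exact (nn_mistake_in_new_cell d c Xs Xt separated (fun x => proj2 (Hc x)) HXt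
               i j Hij mistake_j same_cell).
    + exact (nn_mistake_in_new_cell d c Xs Xt separated (fun x => proj2 (Hc x)) HXt
               j i Hij mistake_i (eq_sym same_cell)).
Qed.

Definition separating_after (S : list X) (p : X * X) : Prop :=
  eta (fst p) <> eta (snd p) /\
  forall q, In q (fst p :: S) -> rho (snd p) q <= rho (snd p) (fst p) ->
    eta q <> eta (snd p).

Lemma separating_pair_after (S : list X) :
  class_separation rho eta = Finite 0 -> exists p, separating_after S p.
Proof.
  intros sep0. rewrite class_separation_eq0 in sep0 by exact rho_ge0.
  destruct (classic (exists p, In p S /\
              forall e, 0 < e -> exists x, eta x <> eta p /\ rho x p < e))
    as [[p [Hp p_limit]]|all_isolated].
  - destruct (common_pos_lower_bound X (fun q r => q <> p /\ r = rho p q) S)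
      as [r [Hr r_below]].
    { intros q _. destruct (classic (q = p)) as [->|Hqp].
      - exists 1. split; [lra|]. intros r [Hne _]. contradiction.
      - exists (rho p q). split.
        + destruct (rho_ge0 p q) as [|H0]; [assumption|].
          symmetry in H0. apply rho_eq0 in H0. congruence.
        + intros r [_ ->]. lra. }
    destruct (p_limit (r / 2) ltac:(lra)) as [b [Hbp Hclose]].
    exists (p, b). split; simpl; [congruence|].
    intros q Hq Hqb. destruct (classic (q = p)) as [->|Hqp]; [congruence|].
    exfalso. destruct Hq as [->|Hq]; [contradiction|].
    pose proof (r_below q Hq (rho p q) (conj Hqp eq_refl)).
    pose proof (rho_triangle p b q). rewrite (rho_sym b p) in Hqb.
    rewrite (rho_sym p b) in *. lra.
  - destruct (common_pos_lower_bound X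
                (fun p r => exists x, eta x <> eta p /\ r = rho x p) S)
      as [e [He e_below]].
    { intros p Hp. apply NNPP; intros Hno. apply all_isolated. exists p.
      split; [exact Hp|]. intros e He. apply NNPP; intros Hfar. apply Hno.
      exists e. split; [exact He|]. intros r [x [Hx ->]].
      apply Rnot_lt_le; intros Hlt. apply Hfar. eauto. }
    destruct (sep0 (e / 2) ltac:(lra)) as [a [b [Hab Hclose]]].
    exists (a, b). split; simpl; [exact Hab|].
    intros q Hq Hqb Hqb_eq. destruct Hq as [->|Hq]; [congruence|].
    destruct (classic (eta a = eta q)) as [Haq|Haq]; [congruence|].
    pose proof (e_below q Hq (rho a q) (ex_intro _ a (conj Haq eq_refl))).
    pose proof (rho_triangle a b q). rewrite (rho_sym b a) in Hqb. lra.
Qed.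

Section PairedSequence.

Variable pick : list X -> X * X.

Fixpoint paired_prefix (k : nat) : list X :=
  match k with
  | O => nil
  | S k => let h := paired_prefix k in snd (pick h) :: fst (pick h) :: h
  end.

Definition paired_sequence (n : nat) : X :=
  let p := pick (paired_prefix (Nat.div2 n)) in if Nat.odd n then snd p else fst p.

Lemma paired_sequence_double (k : nat) :
  paired_sequence (2 * k) = fst (pick (paired_prefix k)).
Proof. unfold paired_sequence. rewrite Nat.div2_double, Nat.odd_even. reflexivity. Qed.

Lemma paired_sequence_succ_double (k : nat) :
  paired_sequence (S (2 * k)) = snd (pick (paired_prefix k)).
Proof.
  unfold paired_sequence. rewrite Nat.div2_succ_double.
  replace (S (2 * k)) with (2 * k + 1)%nat by lia. rewrite Nat.odd_odd. reflexivity.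
Qed.

Lemma paired_sequence_in_prefix (k i : nat) :
  (i < 2 * k)%nat -> In (paired_sequence i) (paired_prefix k).
Proof.
  induction k as [|k IH]; intros Hi; [lia|]. simpl paired_prefix.
  destruct (Nat.eq_dec i (S (2 * k))) as [->|Hodd].
  { left. symmetry. apply paired_sequence_succ_double. }
  destruct (Nat.eq_dec i (2 * k)) as [->|Heven].
  { right; left. symmetry. apply paired_sequence_double. }
  right; right. apply IH. lia.
Qed.

Hypothesis pick_separating : forall S, separating_after S (pick S).

Lemma paired_sequence_odd_mistakes (Xt : nat -> X) :
  nn_sequence rho paired_sequence Xt ->
  forall j, eta (paired_sequence (S (2 * j))) <> eta (Xt (S (2 * j))).
Proof.
  intros HXt j.
  destruct (HXt (S (2 * j)) ltac:(lia)) as [[i [Hi ->]] nn_min].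
  pose proof (nn_min (2 * j)%nat ltac:(lia)) as Hnn.
  rewrite paired_sequence_succ_double, paired_sequence_double in *.
  apply not_eq_sym, (proj2 (pick_separating (paired_prefix j))); [|exact Hnn].
  destruct (Nat.eq_dec i (2 * j)) as [->|Hne].
  - left. symmetry. apply paired_sequence_double.
  - right. apply paired_sequence_in_prefix. lia.
Qed.

End PairedSequence.

Lemma not_nn_online_consistent_of_separation0 :
  class_separation rho eta = Finite 0 ->
  exists Xs, ~ nn_online_consistent rho eta Xs.
Proof.
  intros sep0.
  destruct (choice _ (fun S => separating_pair_after S sep0)) as [pick pick_separating].
  exists (paired_sequence pick).
  apply not_nn_online_consistent_of_odd_mistakes.
  exact (paired_sequence_odd_mistakes pick pick_separating).
Qed.

End NearestNeighborMistakes.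

Theorem proposition1 (X Y : Type) (rho : X -> X -> R) (eta : X -> Y) :
  is_metric rho -> totally_bounded rho ->
  ((exists Xs : nat -> X, ~ nn_online_consistent rho eta Xs) <->
   class_separation rho eta = Finite 0).
Proof.
  intros Hmetric Htb. split.
  - intros [Xs not_consistent]. rewrite class_separation_eq0 by apply Hmetric.
    intros d Hd. apply NNPP; intros separated. apply not_consistent.
    apply (nn_online_consistent_of_separated X Y rho eta Hmetric d Xs Htb Hd).
    intros x x' Hxx'. apply Rnot_lt_le; intros Hlt. apply separated. eauto.
  - apply not_nn_online_consistent_of_separation0, Hmetric.
Qed.
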